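(* Let $M$ be a compact complex manifold of complex dimension $n$ and $0\le p,q\le n$. The following are equivalent: (1) $B^{p,q}=0$ and $D^{p,q}=0$; (2) the map $H^{p,q}_{\partial\bar\partial}\to H^{p,q}_{\partial+\bar\partial}$ induced by the identity is injective; (3) every $\omega\in\mathcal{E}^{p,q}(M)$ with $d\omega=0$ of the form $\omega=\partial a+\bar\partial b$ ($a\in\mathcal E^{p-1,q}(M)$, $b\in\mathcal E^{p,q-1}(M)$) satisfies $\omega=\partial\bar\partial\alpha$ for some $\alpha\in\mathcal{E}^{p-1,q-1}(M)$; (4) $B^{p,q}=0$ and $B^{q,p}=0$; (5) $D^{p,q}=0$ and $D^{q,p}=0$.
   Context: $\mathcal{E}^{p,q}(M)$ is the space of smooth complex $(p,q)$-forms. In bidegree $(p,q)$, $\ker\partial,\ker\bar\partial$ denote kernels on $\mathcal{E}^{p,q}(M)$, and $\mathrm{Im}\,\partial=\partial\mathcal{E}^{p-1,q}(M)$, $\mathrm{Im}\,\bar\partial=\bar\partial\mathcal{E}^{p,q-1}(M)$, $\mathrm{Im}\,\partial\bar\partial=\partial\bar\partial\mathcal{E}^{p-1,q-1}(M)$. $H^{p,q}_{\partial\bar\partial}=(\ker\partial\cap\ker\bar\partial)/\mathrm{Im}\,\partial\bar\partial$ (Bott–Chern), $H^{p,q}_{\partial+\bar\partial}=\ker\partial\bar\partial/(\mathrm{Im}\,\partial+\mathrm{Im}\,\bar\partial)$ (Aeppli), $B^{p,q}=(\mathrm{Im}\,\partial\cap\ker\bar\partial)/\mathrm{Im}\,\partial\bar\partial$,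 $D^{p,q}=(\ker\partial\cap\mathrm{Im}\,\bar\partial)/\mathrm{Im}\,\partial\bar\partial$, all in bidegree $(p,q)$. *)

From HB Require Import structures.
From mathcomp Require Import all_boot all_order all_algebra all_field.
Set Implicit Arguments. Unset Strict Implicit. Unset Printing Implicit Defensive.
Import Order.TTheory GRing.Theory Num.Theory.
Local Open Scope ring_scope.

Section DC.
Variables (V : lmodType algC) (E : int -> int -> V -> Prop)
  (del delb : {linear V -> V}) (sigma : V -> V).

(* Axioms satisfied by the space V of all smooth complex forms on M
   (E p q x : "x is a (p,q)-form"), del, delbar, and complex conjugation. *)
Definition is_conj_double_complex (n : nat) : Prop :=
  [/\
      (forall p q, E p q 0),
      (forall p q (a : algC) x y, E p q x -> E p q y -> E p q (a *: x + y)),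
      (forall p q x, (p < 0) || (q < 0) || (n%:Z < p) || (n%:Z < q) ->
          E p q x -> x = 0) &
      (forall p q p' q' x, (p, q) <> (p', q') -> E p q x -> E p' q' x -> x = 0)] /\
   [/\
      (forall p q x, E p q x -> E (p + 1) q (del x)),
      (forall p q x, E p q x -> E p (q + 1) (delb x)),
      (* d = del + delbar, d^2 = 0 *)
      (forall x, del (del x) = 0),
      (forall x, delb (delb x) = 0) &
      (forall x, del (delb x) + delb (del x) = 0)] /\
   [/\ (* complex conjugation: antilinear involution, (p,q) -> (q,p),
          conj o del = delbar o conj *)
      (forall x y, sigma (x + y) = sigma x + sigma y),
      (forall (a : algC) x, sigma (a *: x) = a^* *: sigma x),
      (forall x, sigma (sigma x) = x),
      (forall p q x, E p q x -> E q p (sigma x)) &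
      (forall x, sigma (del x) = delb (sigma x))].

Definition in_im_del p q (w : V) := exists a, E (p - 1) q a /\ del a = w.
Definition in_im_delb p q (w : V) := exists b, E p (q - 1) b /\ delb b = w.
Definition in_im_ddb p q (w : V) :=
  exists c, E (p - 1) (q - 1) c /\ del (delb c) = w.

(* B^{p,q} = (Im del /\ ker delbar) / Im del delbar = 0 *)
Definition B_zero p q : Prop :=
  forall w, E p q w -> in_im_del p q w -> delb w = 0 -> in_im_ddb p q w.

(* D^{p,q} = (ker del /\ Im delbar) / Im del delbar = 0 *)
Definition D_zero p q : Prop :=
  forall w, E p q w -> del w = 0 -> in_im_delb p q w -> in_im_ddb p q w.

(* H_BC^{p,q} -> H_A^{p,q} (induced by identity) is injective:
   a class [w] with w in ker del /\ ker delbar mapping to 0 in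
   ker(del delbar)/(Im del + Im delbar) is 0 in H_BC. *)
Definition BC_to_A_injective p q : Prop :=
  forall w, E p q w -> del w = 0 -> delb w = 0 ->
    (exists a b, E (p - 1) q a /\ E p (q - 1) b /\ w = del a + delb b) ->
    in_im_ddb p q w.

Definition cond3 p q : Prop :=
  forall w, E p q w -> del w + delb w = 0 ->
    forall a b, E (p - 1) q a -> E p (q - 1) b -> w = del a + delb b ->
    exists alpha, E (p - 1) (q - 1) alpha /\ w = del (delb alpha).

End DC.

(* Conjugation is an antilinear involution exchanging bidegrees (p,q) and (q,p)
   and intertwining del with delbar, so it maps B^{q,p} isomorphically onto
   D^{p,q}; this gives (4) <-> (1) <-> (5).  For (1) -> (3), a d-closed
   (p,q)-form is del- and delbar-closed because del w and delbar w have
   different bidegrees, and then del a lies in B^{p,q} and delbar b in D^{p,q}.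
   (3) -> (2) is immediate, and (2) -> (1) takes b = 0 resp. a = 0. *)
From HB Require Import structures.
From mathcomp Require Import all_boot all_order all_algebra all_field.
Set Implicit Arguments. Unset Strict Implicit. Unset Printing Implicit Defensive.
Import Order.TTheory GRing.Theory Num.Theory.
Local Open Scope ring_scope.

Section ConjDoubleComplex.
Variables (V : lmodType algC) (E : int -> int -> V -> Prop)
  (del delb : {linear V -> V}) (sigma : V -> V) (n : nat).
Hypothesis hM : is_conj_double_complex E del delb sigma n.

Lemma form0 p q : E p q 0.
Proof. by case: hM => [[]]. Qed.

Lemma formD p q x y : E p q x -> E p q y -> E p q (x + y).
Proof. by case: hM => [[_ hlin _ _] _] Ex Ey; rewrite -[x]scale1r; apply: hlin. Qed.

Lemma formN p q x : E p q x -> E p q (- x).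
Proof.
case: hM => [[_ hlin _ _] _] Ex.
by rewrite -scaleN1r -[_ *: x]addr0; apply: hlin => //; apply: form0.
Qed.

Lemma form_del p q x : E (p - 1) q x -> E p q (del x).
Proof. by case: hM => [_ [[hdel _ _ _ _] _]] /hdel; rewrite subrK. Qed.

Lemma form_delb p q x : E p (q - 1) x -> E p q (delb x).
Proof. by case: hM => [_ [[_ hdelb _ _ _] _]] /hdelb; rewrite subrK. Qed.

Lemma form_conj p q x : E p q x -> E q p (sigma x).
Proof. by case: hM => [_ [_ [_ _ _ hconj _]]]; apply: hconj. Qed.

Lemma del_delb_anticomm x : del (delb x) = - delb (del x).
Proof. by case: hM => [_ [[_ _ _ _ hanti] _]]; apply/eqP; rewrite -addr_eq0 hanti. Qed.

Lemma conjK : involutive sigma.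
Proof. by case: hM => [_ [_ [_ _ hK _ _]]]. Qed.

Lemma conj0 : sigma 0 = 0.
Proof.
case: hM => [_ [_ [hadd _ _ _ _]]].
by apply: (addrI (sigma 0)); rewrite -hadd !addr0.
Qed.

Lemma conj_del x : sigma (del x) = delb (sigma x).
Proof. by case: hM => [_ [_ [_ _ _ _ hdel]]]. Qed.

Lemma conj_delb x : sigma (delb x) = del (sigma x).
Proof. by rewrite -{1}(conjK x) -conj_del conjK. Qed.

Lemma conj_im_del p q w : in_im_delb E delb q p w -> in_im_del E del p q (sigma w).
Proof. by case=> b [Eb <-]; exists (sigma b); rewrite conj_delb; split=> //; apply: form_conj. Qed.

Lemma conj_im_delb p q w : in_im_del E del q p w -> in_im_delb E delb p q (sigma w).
Proof. by case=> a [Ea <-]; exists (sigma a); rewrite conj_del; split=> //; apply: form_conj. Qed.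

Lemma conj_im_ddb p q w :
  in_im_ddb E del delb q p w -> in_im_ddb E del delb p q (sigma w).
Proof.
case=> c [Ec <-]; exists (- sigma c); split; first exact: formN (form_conj Ec).
by rewrite conj_del conj_delb del_delb_anticomm !raddfN opprK.
Qed.

Lemma D_zero_of_B_zero_swap p q :
  B_zero E del delb q p -> D_zero E del delb p q.
Proof.
move=> HB w Ew dw0 imw; rewrite -(conjK w); apply: conj_im_ddb.
apply: HB; [exact: form_conj | exact: conj_im_del | by rewrite -conj_del dw0 conj0].
Qed.

Lemma B_zero_of_D_zero_swap p q :
  D_zero E del delb q p -> B_zero E del delb p q.
Proof.
move=> HD w Ew imw dbw0; rewrite -(conjK w); apply: conj_im_ddb.
apply: HD; [exact: form_conj | by rewrite -conj_delb dbw0 conj0 | exact: conj_im_delb].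
Qed.

Lemma d_closed_form_split p q w : E p q w -> del w + delb w = 0 ->
  del w = 0 /\ delb w = 0.
Proof.
case: hM => [[_ _ _ hdisj] [[hdel hdelb _ _ _] _]] Ew dw0.
have bideg_neq : (p + 1, q) <> (p, q + 1).
  by case=> /eqP; rewrite -subr_eq0 addrAC subrr add0r oner_eq0.
have delw_eq : del w = - delb w by apply/eqP; rewrite -subr_eq0 opprK dw0.
have delw0 : del w = 0.
  apply: (hdisj _ _ _ _ _ bideg_neq (hdel _ _ _ Ew)).
  by rewrite delw_eq; apply: formN (hdelb _ _ _ Ew).
by split=> //; move: dw0; rewrite delw0 add0r.
Qed.

Lemma cond3_of_BD_zero p q :
  B_zero E del delb p q -> D_zero E del delb p q -> cond3 E del delb p q.
Proof.
case: hM => [_ [[_ _ hdel2 hdelb2 _] _]] HB HD w Ew dw0 a b Ea Eb hw.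
have [delw0 delbw0] := d_closed_form_split Ew dw0.
have [c1 [Ec1 h1]] : in_im_ddb E del delb p q (del a).
  apply: HB; [exact: form_del | by exists a |].
  by move: delbw0; rewrite hw raddfD /= hdelb2 addr0.
have [c2 [Ec2 h2]] : in_im_ddb E del delb p q (delb b).
  apply: HD; [exact: form_delb | | by exists b].
  by move: delw0; rewrite hw raddfD /= hdel2 add0r.
by exists (c1 + c2); rewrite hw !raddfD /= h1 h2; split=> //; apply: formD.
Qed.

Lemma BC_to_A_injective_of_cond3 p q :
  cond3 E del delb p q -> BC_to_A_injective E del delb p q.
Proof.
move=> H3 w Ew delw0 delbw0 [a [b [Ea [Eb hw]]]].
have [|alpha [Ealpha ->]] := H3 w Ew _ a b Ea Eb hw; last by exists alpha.
by rewrite delw0 delbw0 addr0.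
Qed.

Lemma BD_zero_of_BC_to_A_injective p q : BC_to_A_injective E del delb p q ->
  B_zero E del delb p q /\ D_zero E del delb p q.
Proof.
case: hM => [_ [[_ _ hdel2 hdelb2 _] _]] Hinj; split.
- move=> w Ew [a [Ea ha]] dbw0; subst w; apply: Hinj => //.
  by exists a, 0; rewrite raddf0 addr0; do !split=> //; apply: form0.
- move=> w Ew dw0 [b [Eb hb]]; subst w; apply: Hinj => //.
  by exists 0, b; rewrite raddf0 add0r; do !split=> //; apply: form0.
Qed.

End ConjDoubleComplex.

Theorem mainTheorem7 (V : lmodType algC) (E : int -> int -> V -> Prop)
  (del delb : {linear V -> V}) (sigma : V -> V) (n : nat)
  (hM : is_conj_double_complex E del delb sigma n)
  (p q : int) (hp : 0 <= p <= n%:Z) (hq : 0 <= q <= n%:Z) :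
  [<-> B_zero E del delb p q /\ D_zero E del delb p q;
       BC_to_A_injective E del delb p q;
       cond3 E del delb p q;
       B_zero E del delb p q /\ B_zero E del delb q p;
       D_zero E del delb p q /\ D_zero E del delb q p].
Proof.
have D_of_B := D_zero_of_B_zero_swap hM; have B_of_D := B_zero_of_D_zero_swap hM.
tfae.
- case=> HB HD; exact: BC_to_A_injective_of_cond3 (cond3_of_BD_zero hM HB HD).
- case/(BD_zero_of_BC_to_A_injective hM) => HB HD; exact (cond3_of_BD_zero hM HB HD).
- move/BC_to_A_injective_of_cond3/(BD_zero_of_BC_to_A_injective hM) => [HB HD].
  by split; [exact: HB | exact: B_of_D].
- by case=> HB HB'; split; [exact: D_of_B HB' | exact: D_of_B HB].
- by case=> HD HD'; split; [exact: B_of_D HD' | exact: HD].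
Qed.
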